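(* Let $q\ge5$ be a prime power and let $\mathcal{C}_\mathscr{C}$ be the $[q+1,q-3,5]_q$ code with parity check matrix whose columns are the vectors $(1,t,t^2,t^3)$, $t\in\mathbb{F}_q$, and $(0,0,0,1)$. Let $W\in\{2,3\}$ and let $\mathcal{V}^{(W)}_a,\mathcal{V}^{(W)}_b$ be two weight-$W$ cosets of $\mathcal{C}_\mathscr{C}$ with distinct weight distributions. Then for $4\le w\le q+1$, $$B_{w}(\mathcal{V}^{(W)}_a)-B_w(\mathcal{V}^{(W)}_b)=-(-1)^w\left[B_3(\mathcal{V}^{(W)}_a)-B_3(\mathcal{V}^{(W)}_b)\right]\binom{q-2}{w-3}.$$
   Context: A coset of a linear code $\mathcal{C}\subseteq\mathbb{F}_q^n$ is a set $\mathbf{v}+\mathcal{C}$; its weight is the minimum Hamming weight of its vectors. $B_w(\mathcal{V})$ is the number of vectors of Hamming weight $w$ in the coset $\mathcal{V}$; the weight distribution of $\mathcal{V}$ is $(B_w(\mathcal{V}))_{w}$. *)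

From mathcomp Require Import all_boot all_order all_algebra.
Set Implicit Arguments. Unset Strict Implicit. Unset Printing Implicit Defensive.
Import GRing.Theory.
Local Open Scope ring_scope.

(* Coordinates of the length-(q+1) code are indexed by [option F]:
   [Some t] is the column (1,t,t^2,t^3), [None] the column (0,0,0,1). *)
Section Codes.
Variable F : finFieldType.

Definition vec := {ffun option F -> F}.

Definition hwt (v : vec) : nat := #|[set i | v i != 0]|.

Definition pcm (k : 'I_4) (i : option F) : F :=
  match i with
  | Some t => t ^+ k
  | None => (k == 3 :> nat)%:R
  end.

Definition codeCC : {set vec} :=
  [set c : vec | [forall k : 'I_4, \sum_i pcm k i * c i == 0]].

Definition coset (v : vec) : {set vec} := [set v + c | c in codeCC].

Definition set_weight (V : {set vec}) : nat :=
  \big[minn/#|{: option F}|]_(x in V) hwt x.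

Definition Bw (w : nat) (V : {set vec}) : nat := #|[set x in V | hwt x == w]|.

End Codes.

(* Any four columns of the parity-check matrix are linearly independent: a
   nonzero codeword of weight at most 4 would be orthogonal to the evaluation
   of a polynomial of degree at most 3 vanishing on all but one point of its
   support. Hence, for every set S of at least 4 coordinates, the syndrome map
   is onto from the vectors supported in S, and all cosets contain the same
   number of vectors supported in S. Summing over the S of size s shows that
   sum_r B_r C(n - r, n - s) is the same for all cosets when 4 <= s <= n = q + 1.
   For two cosets of weight W in {2, 3} the differences d_r of their weight
   distributions vanish for r < 3 (a coset of weight 2 has a unique vector of
   weight 2), and this unitriangular system in the d_r then forces
   d_w = (-1)^(w-3) C(q - 2, w - 3) d_3. *)

From mathcomp Require Import all_boot all_order all_algebra.
From mathcomp Require Import zify ring.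

Set Implicit Arguments. Unset Strict Implicit. Unset Printing Implicit Defensive.
Import Order.TTheory GRing.Theory.
Local Open Scope ring_scope.

Lemma mul_bin_trinomial N m j : (m <= N)%N ->
  ('C(N, j) * 'C(N - j, N - m) = 'C(N, m) * 'C(m, j))%N.
Proof.
move=> le_mN; have [lejm|ltmj] := leqP j m; last first.
  rewrite [X in (_ = _ * X)%N]bin_small // muln0.
  have [le_jN|lt_Nj] := leqP j N; last by rewrite bin_small.
  by rewrite [X in (_ * X)%N]bin_small ?muln0 //; lia.
have facts_gt0 : (0 < j`! * (m - j)`! * (N - m)`!)%N by rewrite !muln_gt0 !fact_gt0.
apply/eqP; rewrite -(eqn_pmul2r facts_gt0); apply/eqP.
have := bin_fact (leq_sub2l N lejm); rewrite (_ : N - j - (N - m) = m - j)%N; last by lia.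
have := bin_fact (leq_trans lejm le_mN); have := bin_fact lejm; have := bin_fact le_mN.
move=> eNm emj eNj eNjm.
transitivity N`!; first by rewrite -eNj -eNjm; ring.
by rewrite -eNm -emj; ring.
Qed.

Section BinomialSystem.
Variable R : comRingType.
Implicit Types (e : nat -> R) (n k s : nat).

Lemma sum_alt_bin m : (0 < m)%N -> \sum_(j < m.+1) (-1) ^+ j * 'C(m, j)%:R = 0 :> R.
Proof.
move=> m_gt0; transitivity ((1 - 1 : R) ^+ m); last by rewrite subrr expr0n gtn_eqF.
by rewrite exprBn; apply: eq_bigr => j _; rewrite !expr1n !mulr1 mulr_natr.
Qed.

Lemma big_ord_geq_shift (h : nat -> R) n k :
  \sum_(r < n | (k <= r)%N) h (r - k)%N = \sum_(j < n - k) h j.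
Proof.
transitivity (\sum_(k <= r < n) h (r - k)%N); first by rewrite big_geq_mkord.
rewrite -{1}(add0n k) big_addn big_mkord.
by apply: eq_bigr => j _; rewrite addnK.
Qed.

Lemma binomial_system_eq0 n k e : (forall r, (r < k)%N -> e r = 0) ->
    (forall s, (k <= s <= n)%N -> \sum_(r < n.+1) e r * 'C(n - r, n - s)%:R = 0) ->
  forall s, (s <= n)%N -> e s = 0.
Proof.
move=> e_lt_k sum_eq0 s; elim/ltn_ind: s => s IHs le_sn.
have [/e_lt_k //|le_ks] := ltnP s k.
(* The s-th equation involves e r only for r <= s, and e s with coefficient 1. *)
have := sum_eq0 s; rewrite le_ks le_sn => /(_ isT).
rewrite (bigD1 (Ordinal (le_sn : s < n.+1)%N)) //= binn mulr1 big1 ?addr0 //.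
move=> [r lt_rn] /= /eqP ne_rs; case: (ltngtP r s) => [lt_rs|lt_sr|eq_rs].
- by rewrite IHs ?mul0r //; lia.
- by rewrite bin_small ?mulr0 //; lia.
- by case: ne_rs; apply: val_inj.
Qed.

Lemma sum_alt_bin_mul_bin n k s : (k < s <= n)%N ->
  \sum_(r < n.+1) (if (k <= r)%N then (-1) ^+ (r - k) * 'C(n - k, r - k)%:R else 0)
                  * 'C(n - r, n - s)%:R = 0 :> R.
Proof.
move=> /andP[lt_ks le_sn].
transitivity ('C(n - k, s - k)%:R *
    \sum_(r < n.+1 | (k <= r)%N) (-1) ^+ (r - k) * 'C(s - k, r - k)%:R : R).
  rewrite mulr_sumr [RHS]big_mkcond; apply: eq_bigr => r _.
  case: ifP => [le_kr|_]; last by rewrite mul0r.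
  have := mul_bin_trinomial (r - k) (leq_sub2r k le_sn).
  have -> : (n - k - (r - k) = n - r)%N by lia.
  have -> : (n - k - (s - k) = n - s)%N by lia.
  by move=> trin; rewrite -mulrA -natrM trin natrM mulrCA.
rewrite (big_ord_geq_shift (fun j => (-1) ^+ j * 'C(s - k, j)%:R)).
have le_sk_nk : ((s - k).+1 <= n.+1 - k)%N by lia.
have -> : \sum_(j < n.+1 - k) (-1) ^+ j * 'C(s - k, j)%:R =
          \sum_(j < (s - k).+1) (-1) ^+ j * 'C(s - k, j)%:R :> R.
  rewrite (big_ord_widen _ (fun j => (-1) ^+ j * 'C(s - k, j)%:R) le_sk_nk).
  rewrite [RHS]big_mkcond /=; apply: eq_bigr => j _.
  by case: ltnP => // lt_skj; rewrite bin_small ?mulr0.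
by rewrite sum_alt_bin ?mulr0 // subn_gt0.
Qed.

Lemma binomial_system_solution n k e : (forall r, (r < k)%N -> e r = 0) ->
    (forall s, (k < s <= n)%N -> \sum_(r < n.+1) e r * 'C(n - r, n - s)%:R = 0) ->
  forall s, (k <= s <= n)%N -> e s = e k * ((-1) ^+ (s - k) * 'C(n - k, s - k)%:R).
Proof.
move=> e_lt_k sum_eq0 s /andP[le_ks le_sn].
pose f r : R := if (k <= r)%N then (-1) ^+ (r - k) * 'C(n - k, r - k)%:R else 0.
suff /(_ s le_sn)/eqP : forall r, (r <= n)%N -> e r - e k * f r = 0.
  by rewrite subr_eq0 /f le_ks => /eqP.
apply: (@binomial_system_eq0 n k.+1) => [r lt_rk|t lt_kt].
  move: lt_rk; rewrite /f ltnS leq_eqVlt => /orP[/eqP->|lt_rk].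
    by rewrite leqnn subnn bin0 expr0 !mulr1 subrr.
  by rewrite leqNgt lt_rk e_lt_k // mulr0 subr0.
under eq_bigr do rewrite mulrBl -mulrA.
by rewrite sumrB -mulr_sumr sum_alt_bin_mul_bin // mulr0 subr0 sum_eq0.
Qed.

End BinomialSystem.

Lemma card_option_set (T : finType) (S : {set option T}) :
  #|S| = ((None \in S) + #|[set t | Some t \in S]|)%N.
Proof.
rewrite (cardsD1 None); congr (_ + _)%N.
rewrite -[RHS](card_imset _ (@Some_inj _)); congr #|pred_of_set _|.
apply/setP => -[t|]; rewrite !inE /=; last by apply/esym/imsetP => -[].
by rewrite mem_imset ?inE //; apply: Some_inj.
Qed.

Lemma sum_bool_card (T : finType) (P Q : pred T) :
  (\sum_(x | P x) Q x)%N = #|[set x | P x && Q x]|.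
Proof.
rewrite -sum1_card big_mkcond [RHS]big_mkcond /=; apply: eq_bigr => x _.
by rewrite inE; case: (P x); case: (Q x).
Qed.

Lemma card_supersets (T : finType) (A : {set T}) s : (s <= #|T|)%N ->
  #|[set B : {set T} | (#|B| == s) && (A \subset B)]| = 'C(#|T| - #|A|, #|T| - s).
Proof.
move=> le_sT; rewrite -(card_imset _ (@setC_inj T)).
have -> : [set ~: B | B in [set B : {set T} | (#|B| == s) && (A \subset B)]] =
          [set C : {set T} | C \subset ~: A & #|C| == (#|T| - s)%N].
  apply/setP => C; rewrite !inE; apply/imsetP/andP => [[B]|[sCA /eqP card_C]].
    rewrite inE => /andP[/eqP card_B sAB] ->.
    by rewrite setCS sAB -(cardsC B) card_B addKn.
  exists (~: C); last by rewrite setCK.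
  by rewrite inE -setCS setCK sCA andbT; apply/eqP; have := cardsC C; lia.
by rewrite (cards_draws (~: A) (#|T| - s)%N) cardsCs setCK.
Qed.


Section Syndrome.
Variable F : finFieldType.
Implicit Types (x y c : vec F) (S : {set option F}) (p : {poly F}).

Definition syndrome x : {ffun 'I_4 -> F} := [ffun k => \sum_i pcm k i * x i].

Lemma syndromeB x y : syndrome (x - y) = syndrome x - syndrome y.
Proof.
apply/ffunP=> k; rewrite !ffunE -sumrB.
by apply: eq_bigr => i _; rewrite !ffunE mulrBr.
Qed.

Lemma syndromeD x y : syndrome (x + y) = syndrome x + syndrome y.
Proof.
apply/ffunP=> k; rewrite !ffunE -big_split.
by apply: eq_bigr => i _; rewrite !ffunE mulrDr.
Qed.

Lemma in_codeCC c : (c \in codeCC F) = (syndrome c == 0).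
Proof.
rewrite inE; apply/forallP/eqP => [c0|/ffunP c0 k].
  by apply/ffunP=> k; rewrite !ffunE; apply/eqP.
by have := c0 k; rewrite !ffunE => ->.
Qed.

Lemma mem_coset v x : (x \in coset v) = (syndrome x == syndrome v).
Proof.
apply/imsetP/eqP => [[c + ->]|xv].
  by rewrite in_codeCC syndromeD => /eqP->; rewrite addr0.
exists (x - v); last by rewrite addrC subrK.
by rewrite in_codeCC syndromeB xv subrr.
Qed.

Definition supp x : {set option F} := [set i | x i != 0].

Lemma supp_add x y S : supp x \subset S -> supp y \subset S -> supp (x + y) \subset S.
Proof.
move=> /subsetP sxS /subsetP syS; apply/subsetP => i; rewrite inE ffunE.
have [xi0|xi_neq0] := eqVneq (x i) 0; last by move=> _; apply: sxS; rewrite inE.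
by rewrite xi0 add0r => yi; apply: syS; rewrite inE.
Qed.

Lemma suppN x : supp (- x) = supp x.
Proof. by apply/setP => i; rewrite !inE ffunE oppr_eq0. Qed.

(* [None] is the point at infinity of the projective line: there a polynomial
   of degree at most 3 takes the value of its coefficient of X^3. *)
Definition peval (p : {poly F}) (i : option F) : F :=
  if i is Some t then p.[t] else p`_3.

Lemma peval_pcm p i : (size p <= 4)%N -> peval p i = \sum_(k < 4) p`_k * pcm k i.
Proof.
case: i => [t|] size_p /=; first by rewrite (horner_coef_wide _ size_p).
by rewrite !big_ord_recr big_ord0 /= !mulr0 !add0r mulr1.
Qed.

Lemma syndrome_eq0_peval c p : syndrome c = 0 -> (size p <= 4)%N ->
  \sum_i peval p i * c i = 0.
Proof.
move=> /ffunP c0 size_p.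
under eq_bigr do rewrite peval_pcm // mulr_suml.
rewrite exchange_big big1 //= => k _.
have := c0 k; rewrite !ffunE => c0k.
by under eq_bigr do rewrite -mulrA; rewrite -mulr_sumr c0k mulr0.
Qed.

Lemma codeword_small_eq0 c : syndrome c = 0 -> (hwt c <= 4)%N -> c = 0.
Proof.
move=> c0 wt_c; set T := [set t | Some t \in supp c].
have card_supp : hwt c = ((None \in supp c) + #|T|)%N by apply: card_option_set.
have c_fin0 t : c (Some t) = 0.
  apply: contraTeq isT => ct.
  have tT : t \in T by rewrite !inE.
  (* p vanishes on the rest of the finite support; it has degree < 3 when
     [None] is in the support, so that coordinate is killed too. *)
  pose p := \prod_(s <- enum (T :\ t)) ('X - s%:P).
  have size_p : size p = #|T :\ t|.+1 by rewrite size_prod_XsubC -cardE.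
  have card_T := cardsD1 t T; rewrite tT in card_T.
  have size_p4 : (size p <= 4)%N by rewrite size_p; lia.
  have := syndrome_eq0_peval c0 size_p4.
  rewrite (bigD1 (Some t)) //= big1 ?addr0 => [/eqP|i ne_it].
    by rewrite mulf_eq0 (negbTE ct) orbF -rootE root_prod_XsubC mem_enum !inE eqxx.
  have [->|ci] := eqVneq (c i) 0; first by rewrite mulr0.
  case: i ne_it ci => [s|] ne_st cs /=.
    suff /rootP-> : root p s by rewrite mul0r.
    by rewrite root_prod_XsubC mem_enum !inE cs andbT; apply: contra ne_st => /eqP->.
  have NS : None \in supp c by rewrite inE.
  by rewrite nth_default ?mul0r // size_p; rewrite NS in card_supp; lia.
have c_inf0 : c None = 0.
  move/ffunP: c0 => /(_ 3%:R); rewrite !ffunE (bigD1 None) //= big1 ?addr0 ?mul1r //.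
  by move=> [t|] // _; rewrite c_fin0 mulr0.
by apply/ffunP => -[t|]; rewrite ffunE ?c_fin0 ?c_inf0.
Qed.

Lemma syndrome_onto_supp S (s : {ffun 'I_4 -> F}) : (4 <= #|S|)%N ->
  exists2 y, supp y \subset S & syndrome y = s.
Proof.
move=> card_S; pose e (j : 'I_4) := enum_val (widen_ord card_S j).
have e_inj : injective e.
  by move=> j j' /enum_val_inj[] /val_inj.
pose X (u : {ffun 'I_4 -> F}) : vec F := [ffun i => \sum_j (e j == i)%:R * u j].
have XB u u' : X (u - u') = X u - X u'.
  by apply/ffunP => i; rewrite !ffunE -sumrB; apply: eq_bigr => j _; rewrite !ffunE mulrBr.
have Xe u j : X u (e j) = u j.
  rewrite ffunE (bigD1 j) //= eqxx mul1r big1 ?addr0 // => k ne_kj.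
  by rewrite (inj_eq e_inj) (negbTE ne_kj) mul0r.
have suppX u : supp (X u) \subset [set e j | j : 'I_4].
  apply/subsetP => i; rewrite inE; apply: contraR => not_im_i.
  rewrite ffunE big1 // => j _; case: eqP => [eji|]; last by rewrite mul0r.
  by case/negP: not_im_i; rewrite -eji imset_f.
have syndromeX_inj : injective (syndrome \o X).
  move=> u u' /= eq_s; apply/ffunP => j.
  have X0 : X (u - u') = 0.
    apply: codeword_small_eq0; first by rewrite XB syndromeB eq_s subrr.
    apply: leq_trans (subset_leq_card (suppX _)) _.
    by apply: leq_trans (leq_imset_card _ _) _; rewrite card_ord.
  by have := Xe (u - u') j; rewrite X0 !ffunE => /esym/eqP; rewrite subr_eq0 => /eqP.
have [g _ gK] := injF_bij syndromeX_inj.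
exists (X (g s)); last exact: gK.
by apply: subset_trans (suppX _) _; apply/subsetP => _ /imsetP[j _ ->]; apply: enum_valP.
Qed.

Lemma card_coset_supp_le va vb S : (4 <= #|S|)%N ->
  (#|[set x in coset va | supp x \subset S]| <= #|[set x in coset vb | supp x \subset S]|)%N.
Proof.
move=> card_S; have [y supp_y syn_y] := syndrome_onto_supp (syndrome vb - syndrome va) card_S.
rewrite -(card_imset _ (addIr y)); apply/subset_leq_card/subsetP => z /imsetP[x].
rewrite inE mem_coset => /andP[/eqP syn_x supp_x] ->.
by rewrite inE mem_coset syndromeD syn_x syn_y addrC subrK eqxx supp_add.
Qed.

Lemma card_coset_supp va vb S : (4 <= #|S|)%N ->
  #|[set x in coset va | supp x \subset S]| = #|[set x in coset vb | supp x \subset S]|.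
Proof. by move=> card_S; apply/eqP; rewrite eqn_leq !card_coset_supp_le. Qed.

End Syndrome.



Section WeightMoments.
Variable F : finFieldType.
Local Notation n := #|{: option F}|.
Implicit Types (V : {set vec F}) (va vb : vec F).

Lemma sum_card_supp_subset V s : (s <= n)%N ->
  (\sum_(S : {set option F} | #|S| == s) #|[set x in V | supp x \subset S]|)%N
  = (\sum_(x in V) 'C(n - hwt x, n - s))%N.
Proof.
move=> le_sn.
transitivity (\sum_(S : {set option F} | #|S| == s) \sum_(x in V) (supp x \subset S : nat))%N.
  by apply: eq_bigr => S _; rewrite sum_bool_card.
rewrite exchange_big; apply: eq_bigr => x _.
by rewrite (sum_bool_card (fun S : {set option F} => #|S| == s)) card_supersets.
Qed.

Lemma sum_hwt_Bw V (f : nat -> nat) :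
  (\sum_(x in V) f (hwt x))%N = (\sum_(r < n.+1) Bw r V * f r)%N.
Proof.
have hwt_lt (x : vec F) : (hwt x < n.+1)%N by rewrite ltnS max_card.
rewrite (partition_big (fun x => Ordinal (hwt_lt x)) xpredT) //=.
apply: eq_bigr => r _; rewrite -sum_nat_const; apply: eq_big => [x|x /andP[_ /eqP <-]] //.
by rewrite inE -val_eqE.
Qed.

Lemma coset_weight_moments va vb s : (4 <= s <= n)%N ->
  (\sum_(r < n.+1) Bw r (coset va) * 'C(n - r, n - s))%N =
  (\sum_(r < n.+1) Bw r (coset vb) * 'C(n - r, n - s))%N.
Proof.
move=> /andP[le_4s le_sn].
rewrite -!(sum_hwt_Bw _ (fun r => 'C(n - r, n - s))) -!sum_card_supp_subset //.
by apply: eq_bigr => S /eqP card_S; apply: card_coset_supp; rewrite card_S.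
Qed.

End WeightMoments.

Section SetWeight.
Variable F : finFieldType.
Implicit Types (V : {set vec F}) (v x : vec F).

Lemma set_weight_le V x : x \in V -> (set_weight V <= hwt x)%N.
Proof.
move=> xV; rewrite /set_weight -minEnat.
exact: (bigmin_le_cond #|{: option F}| (@hwt F) xV).
Qed.

Lemma set_weight_attained V x0 : x0 \in V -> exists2 x, x \in V & hwt x = set_weight V.
Proof.
move=> x0V; rewrite /set_weight -minEnat.
have hwt_le x : x \in V -> (hwt x <= #|{: option F}|)%O by rewrite leEnat max_card.
have [x xV ->] := eq_bigmin x0 (fun x => x \in V) (@hwt F) x0V hwt_le.
by exists x.
Qed.

Lemma Bw_lt_set_weight V r : (r < set_weight V)%N -> Bw r V = 0%N.
Proof.
move=> lt_rV; apply: eq_card0 => x; rewrite !inE; apply/negP => /andP[xV /eqP wt_x].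
by have := set_weight_le xV; rewrite wt_x leqNgt lt_rV.
Qed.

Lemma Bw2_coset v : set_weight (coset v) = 2%N -> Bw 2 (coset v) = 1%N.
Proof.
move=> wt_v; have vv : v \in coset v by rewrite mem_coset.
have [x0 x0v wt_x0] := set_weight_attained vv.
rewrite /Bw (_ : [set x in coset v | hwt x == 2] = [set x0]) ?cards1 //.
apply/setP => y; rewrite !inE; apply/andP/eqP => [[yv /eqP wt_y]|->]; last first.
  by rewrite x0v wt_x0 wt_v.
apply: subr0_eq; apply: codeword_small_eq0.
  by move: yv x0v; rewrite !mem_coset syndromeB => /eqP-> /eqP->; rewrite subrr.
have supp_sub : supp (y - x0) \subset supp y :|: supp x0.
  by apply: supp_add; rewrite ?suppN ?subsetUl ?subsetUr.
apply: leq_trans (subset_leq_card supp_sub) _; rewrite cardsU.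
by move: wt_y wt_x0; rewrite wt_v /hwt /supp => -> ->; lia.
Qed.

End SetWeight.

Theorem theorem5p1 (F : finFieldType) (W : nat) (va vb : vec F) :
  (5 <= #|F|)%N ->
  (W = 2 \/ W = 3)%N ->
  set_weight (coset va) = W ->
  set_weight (coset vb) = W ->
  (exists w : nat, Bw w (coset va) <> Bw w (coset vb)) ->
  forall w : nat, (4 <= w <= #|F| + 1)%N ->
    (Bw w (coset va))%:Z - (Bw w (coset vb))%:Z =
    - (-1) ^+ w * ((Bw 3 (coset va))%:Z - (Bw 3 (coset vb))%:Z)
      * ('C(#|F| - 2, w - 3))%:Z.
Proof.
move=> _ W23 wt_a wt_b _ w /andP[le_4w le_wq].
have card_n : #|{: option F}| = (#|F| + 1)%N by rewrite card_option addn1.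
set n := #|{: option F}| in card_n.
pose d r : int := (Bw r (coset va))%:Z - (Bw r (coset vb))%:Z.
have d_lt3 r : (r < 3)%N -> d r = 0.
  move=> lt_r3; have [lt_rW|] := ltnP r W.
    by rewrite /d !Bw_lt_set_weight ?wt_a ?wt_b.
  case: W23 wt_a wt_b => -> wt_a wt_b le_Wr; last by lia.
  by rewrite /d (_ : r = 2%N) ?Bw2_coset //; lia.
have d_moments s : (3 < s <= n)%N -> \sum_(r < n.+1) d r * 'C(n - r, n - s)%:R = 0.
  move=> le_4sn; have := congr1 (fun m : nat => m%:R : int) (coset_weight_moments va vb le_4sn).
  rewrite !natr_sum => eq_moments.
  under eq_bigr do rewrite mulrBl -!natz -!natrM.
  by rewrite sumrB eq_moments subrr.
have := binomial_system_solution d_lt3 d_moments (_ : 3 <= w <= n)%N.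
rewrite /d => ->; last by lia.
have -> : (n - 3 = #|F| - 2)%N by lia.
have sign : (-1) ^+ w = - (-1) ^+ (w - 3) :> int.
  by rewrite -{1}(subnK (ltnW le_4w)) exprD mulrN1.
by rewrite sign natz; ring.
Qed.
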